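(* Let $(N,+,* )$ be a planar nearring presented by $(\Phi,R,M)$, and let $d\in D(N)$ be nonzero and not a zero multiplier, written $d=r_d\phi_d$ with $r_d\in R\setminus M$, $\phi_d\in\Phi$. Then $\{\phi\in\Phi : r_d\phi\in D(N)\}$ is a subgroup of $\Phi$, and it contains $Z(\Phi)$.
   Context: A (right) nearring $(N,+,* )$ is a set with a group $(N,+)$ (identity $0$, not necessarily abelian), a semigroup $(N,* )$, and right distributivity $(a+b)*c=a*c+b*c$ for all $a,b,c$. $N$ is planar if the relation $a\cong b$ ($x*a=x*b$ for all $x$) has at least $3$ classes and for all $a,b,c$ with $a\not\cong b$ the equation $x*a=x*b+c$ has a unique solution. Every planar nearring arises as follows, and we always consider it so presented. $\Phi\le \mathrm{Aut}(N,+)$ acts on the right, is fixed point free (for $\phi\ne\mathrm{id}$, $n\phi=n$ iff $n=0$), and $n\mapsto -n+n\phi$ is bijective for each $\phi\ne\mathrm{id}$. $R$ is a set of representatives of the $\Phi$-orbits of $N\setminus\{0\}$ and $M\subseteq R$. Each $a\ne0$ is uniquely $a=r_a\phi_a$ with $r_a\in R$, $\phi_a\in\Phi$. Multiplication: $a*b=0$ if $b=0$ or $r_b\in M$, else $a*b=a\phi_b$ (and $0*b=0$). The zero multipliers are the elements of $M\Phi\cup\{0\}$, i.e. those $n$ with $x*n=0$ for all $x$. $D(N)=\{n: n*(a+b)=n*a+n*b\ \forall a,b\}$. $Z(\Phi)$ is the centre of $\Phi$. *)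

Set Implicit Arguments.

Definition is_group {G : Type} (op : G -> G -> G) (e : G) (inv : G -> G) : Prop :=
  (forall x y z, op x (op y z) = op (op x y) z) /\
  (forall x, op e x = x) /\ (forall x, op x e = x) /\
  (forall x, op (inv x) x = e) /\ (forall x, op x (inv x) = e).

Definition bijective_map {A B : Type} (f : A -> B) : Prop :=
  (forall x y, f x = f y -> x = y) /\ (forall y, exists x, f x = y).

Definition is_subgroup {G : Type} (op : G -> G -> G) (e : G) (inv : G -> G)
  (S : G -> Prop) : Prop :=
  S e /\ (forall x y, S x -> S y -> S (op x y)) /\ (forall x, S x -> S (inv x)).

Definition center {G : Type} (op : G -> G -> G) (z : G) : Prop :=
  forall x, op z x = op x z.

Definition is_nearring {N : Type} (add : N -> N -> N) (zero : N) (opp : N -> N)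
  (mul : N -> N -> N) : Prop :=
  is_group add zero opp /\
  (forall a b c, mul a (mul b c) = mul (mul a b) c) /\
  (forall a b c, mul (add a b) c = add (mul a c) (mul b c)).

Definition nr_equiv {N : Type} (mul : N -> N -> N) (a b : N) : Prop :=
  forall x, mul x a = mul x b.

Definition is_planar_nearring {N : Type} (add : N -> N -> N) (zero : N) (opp : N -> N)
  (mul : N -> N -> N) : Prop :=
  is_nearring add zero opp mul /\
  (exists a b c, ~ nr_equiv mul a b /\ ~ nr_equiv mul a c /\ ~ nr_equiv mul b c) /\
  (forall a b c, ~ nr_equiv mul a b ->
     exists x, mul x a = add (mul x b) c /\
       forall y, mul y a = add (mul y b) c -> y = x).

(* Phi (a group (Phi, comp, id, inv)) is presented as a group of automorphisms
   of (N, add) acting on the right via act : n |-> n phi; the action is faithful,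
   so Phi is identified with a subgroup of Aut(N,+). *)
Definition is_ferrero_pair {N Phi : Type} (add : N -> N -> N) (zero : N) (opp : N -> N)
  (comp : Phi -> Phi -> Phi) (id : Phi) (inv : Phi -> Phi) (act : N -> Phi -> N) : Prop :=
  is_group add zero opp /\ is_group comp id inv /\
  (forall a b phi, act (add a b) phi = add (act a phi) (act b phi)) /\
  (forall n, act n id = n) /\
  (forall n phi psi, act n (comp phi psi) = act (act n phi) psi) /\
  (forall phi psi, (forall n, act n phi = act n psi) -> phi = psi) /\
  (forall phi n, phi <> id -> act n phi = n -> n = zero) /\
  (forall phi, phi <> id -> bijective_map (fun n => add (opp n) (act n phi))).

Definition is_orbit_reps {N Phi : Type} (zero : N) (act : N -> Phi -> N)
  (R M : N -> Prop) : Prop :=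
  (forall r, R r -> r <> zero) /\
  (forall a, a <> zero -> exists r phi, R r /\ a = act r phi) /\
  (forall r1 r2 phi, R r1 -> R r2 -> r1 = act r2 phi -> r1 = r2) /\
  (forall r, M r -> R r).

Definition is_presented_mul {N Phi : Type} (zero : N) (act : N -> Phi -> N)
  (R M : N -> Prop) (mul : N -> N -> N) : Prop :=
  (forall a, mul a zero = zero) /\
  (forall a r phi, R r -> M r -> mul a (act r phi) = zero) /\
  (forall a r phi, R r -> ~ M r -> mul a (act r phi) = act a phi).

Definition distributive_elt {N : Type} (add : N -> N -> N) (mul : N -> N -> N) (n : N) : Prop :=
  forall a b, mul n (add a b) = add (mul n a) (mul n b).

Definition zero_multiplier {N : Type} (zero : N) (mul : N -> N -> N) (n : N) : Prop :=
  forall x, mul x n = zero.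

(* Right multiplication by [r_d phi] is [x |-> x phi], so
   [r_d phi * r_d psi = r_d (phi psi)] and [r_d] is a right identity.  Distributive elements
   are closed under products, and if [e = r_d phi] is distributive then so is its inverse
   [y = r_d phi^-1]: left multiplication by [e] is additive and, on its image, inverse to
   left multiplication by [y].  For [z] central, [(x z) * c = (x * c) z], so right action by
   [z] carries the distributivity of [r_d] over to [r_d z]. *)
From Stdlib Require Import Classical.

Set Implicit Arguments.

Lemma additive_map_zero (G : Type) (add : G -> G -> G) (zero : G) (opp : G -> G)
  (f : G -> G) :
  is_group add zero opp -> (forall a b, f (add a b) = add (f a) (f b)) -> f zero = zero.
Proof.
  intros (addA & add0l & _ & addNl & _) f_add.
  assert (f0 : f zero = add (f zero) (f zero)) by (rewrite <- f_add, add0l; reflexivity).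
  transitivity (add (opp (f zero)) (add (f zero) (f zero))).
  - rewrite addA, addNl, add0l. reflexivity.
  - rewrite <- f0. apply addNl.
Qed.

Section DistributiveSemigroup.

Variables (N : Type) (add mul : N -> N -> N).
Hypothesis mulA : forall a b c, mul a (mul b c) = mul (mul a b) c.

Local Notation D := (distributive_elt add mul).

Lemma distributive_mul u v : D u -> D v -> D (mul u v).
Proof. intros Du Dv a b. rewrite <- !mulA, Dv, Du. reflexivity. Qed.

Variables e y u : N.
Hypotheses (De : D e) (mul_ey : mul e y = u) (mul_ye : mul y e = u)
  (mul_ue : mul u e = e) (mul_uy : mul u y = y).

Let in_image k := exists z, k = mul e z.

Let image_add k1 k2 : in_image k1 -> in_image k2 -> in_image (add k1 k2).
Proof. intros [z1 ->] [z2 ->]. exists (add z1 z2). rewrite De. reflexivity. Qed.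

Let image_mul_u a : in_image (mul u a).
Proof. exists (mul y a). rewrite mulA, mul_ey. reflexivity. Qed.

Let image_mul_y k : in_image k -> in_image (mul y k).
Proof. intros [z ->]. rewrite mulA, mul_ye. apply image_mul_u. Qed.

Let mul_u_image k : in_image k -> mul u k = k.
Proof. intros [z ->]. rewrite mulA, mul_ue. reflexivity. Qed.

Let mul_ey_image k : in_image k -> mul e (mul y k) = k.
Proof. intros Hk. rewrite mulA, mul_ey. apply mul_u_image, Hk. Qed.

Let mul_y_add_image k1 k2 :
  in_image k1 -> in_image k2 -> mul y (add k1 k2) = add (mul y k1) (mul y k2).
Proof.
  intros H1 H2.
  assert (sum_eq : add k1 k2 = mul e (add (mul y k1) (mul y k2)))
    by (rewrite De, !mul_ey_image by assumption; reflexivity).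
  rewrite sum_eq, mulA, mul_ye.
  apply mul_u_image, image_add; apply image_mul_y; assumption.
Qed.

Lemma distributive_idem : D u.
Proof.
  intros a b. rewrite <- mul_ye, <- !mulA, De.
  apply mul_y_add_image; [exists a | exists b]; reflexivity.
Qed.

Lemma distributive_inverse : D y.
Proof.
  assert (mul_yu : mul y u = y) by (rewrite <- mul_ey, mulA, mul_ye; exact mul_uy).
  intros a b. rewrite <- mul_yu, <- !mulA, distributive_idem.
  apply mul_y_add_image; apply image_mul_u.
Qed.

End DistributiveSemigroup.

Section PresentedNearring.

Variables (N Phi : Type) (add : N -> N -> N) (zero : N) (opp : N -> N)
  (mul : N -> N -> N) (comp : Phi -> Phi -> Phi) (id : Phi) (inv : Phi -> Phi)
  (act : N -> Phi -> N) (R M : N -> Prop).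
Hypotheses (Hpair : is_ferrero_pair add zero opp comp id inv act)
  (Hreps : is_orbit_reps zero act R M) (Hmul : is_presented_mul zero act R M mul)
  (Hnear : is_nearring add zero opp mul).

Local Notation D := (distributive_elt add mul).

Let mulA : forall a b c, mul a (mul b c) = mul (mul a b) c.
Proof. apply Hnear. Qed.

Lemma act_zero p : act zero p = zero.
Proof.
  destruct Hpair as (Gadd & _ & act_add & _).
  apply (@additive_map_zero _ add zero opp (fun n => act n p) Gadd).
  intros a b. apply act_add.
Qed.

Lemma mul_act_central z : center comp z -> forall x c, mul (act x z) c = act (mul x c) z.
Proof.
  destruct Hmul as (mul0 & mulM & mulR).
  destruct Hreps as (_ & cover & _).
  destruct Hpair as (_ & _ & _ & _ & act_comp & _).
  intros Hz x c.
  destruct (classic (c = zero)) as [-> | c_neq0].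
  - rewrite !mul0, act_zero. reflexivity.
  - destruct (cover c c_neq0) as (s & q & Rs & ->).
    destruct (classic (M s)) as [Ms | nMs].
    + rewrite !mulM, act_zero by assumption. reflexivity.
    + rewrite !mulR, <- !act_comp, Hz by assumption. reflexivity.
Qed.

Lemma distributive_act_central x z : D x -> center comp z -> D (act x z).
Proof.
  destruct Hpair as (_ & _ & act_add & _).
  intros Dx Hz a b. rewrite !(mul_act_central Hz), Dx, act_add. reflexivity.
Qed.

Variables (r : N) (Rr : R r) (nMr : ~ M r).

Lemma mul_rep x p : mul x (act r p) = act x p.
Proof. apply Hmul; assumption. Qed.

Lemma mul_rep_act p q : mul (act r p) (act r q) = act r (comp p q).
Proof.
  destruct Hpair as (_ & _ & _ & _ & act_comp & _).
  rewrite mul_rep, act_comp. reflexivity.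
Qed.

Lemma distributive_rep_inv p : D (act r p) -> D r /\ D (act r (inv p)).
Proof.
  destruct Hpair as (_ & (_ & _ & _ & compVl & compVr) & _ & act_id & _).
  intros Dp.
  assert (mul_ey : mul (act r p) (act r (inv p)) = r)
    by (rewrite mul_rep_act, compVr, act_id; reflexivity).
  assert (mul_ye : mul (act r (inv p)) (act r p) = r)
    by (rewrite mul_rep_act, compVl, act_id; reflexivity).
  split.
  - exact (distributive_idem mulA _ Dp mul_ey mul_ye (mul_rep r p)).
  - exact (distributive_inverse mulA Dp mul_ey mul_ye (mul_rep r p) (mul_rep r (inv p))).
Qed.

Lemma distributive_rep_subgroup p0 :
  D (act r p0) -> is_subgroup comp id inv (fun p => D (act r p)).
Proof.
  destruct Hpair as (_ & _ & _ & act_id & _).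
  intros Dp0. split; [| split].
  - rewrite act_id. apply (distributive_rep_inv Dp0).
  - intros p q Dp Dq. rewrite <- mul_rep_act. apply distributive_mul; assumption.
  - intros p Dp. apply (distributive_rep_inv Dp).
Qed.

End PresentedNearring.

Theorem mainTheorem2 (N Phi : Type)
  (add : N -> N -> N) (zero : N) (opp : N -> N) (mul : N -> N -> N)
  (comp : Phi -> Phi -> Phi) (id : Phi) (inv : Phi -> Phi) (act : N -> Phi -> N)
  (R M : N -> Prop)
  (Hpair : is_ferrero_pair add zero opp comp id inv act)
  (Hreps : is_orbit_reps zero act R M)
  (Hmul : is_presented_mul zero act R M mul)
  (Hplanar : is_planar_nearring add zero opp mul)
  (d : N) (Hd : distributive_elt add mul d) (Hd0 : d <> zero)
  (Hdz : ~ zero_multiplier zero mul d)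
  (rd : N) (phid : Phi) (Hrd : R rd) (Hrd' : ~ M rd) (Hdrep : d = act rd phid) :
  is_subgroup comp id inv (fun phi => distributive_elt add mul (act rd phi)) /\
  (forall z, center comp z -> distributive_elt add mul (act rd z)).
Proof.
  destruct Hplanar as [Hnear _].
  assert (D_phid : distributive_elt add mul (act rd phid)) by (rewrite <- Hdrep; exact Hd).
  split.
  - exact (distributive_rep_subgroup Hpair Hmul Hnear _ Hrd Hrd' _ D_phid).
  - intros z Hz. apply (distributive_act_central Hpair Hreps Hmul); [| exact Hz].
    exact (proj1 (distributive_rep_inv Hpair Hmul Hnear _ Hrd Hrd' _ D_phid)).
Qed.
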